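(* Let $b\ge 2$ be even and $n\ge 2$, and put $c_i=b^{n+i}+1$. Then $$\mathrm{Ap}(SC^{+}(b,n),c_0)=\Big\{\sum_{i=1}^{n} t_i c_i : (t_1,\dots,t_n)\in RC_b(n)\Big\}.$$
   Context: For an even integer $b\ge2$ and $n\ge0$, $SC^{+}(b,n)=\langle\{b^{n+i}+1: i\in\mathbb{N}\}\rangle$ (submonoid of $(\mathbb{N},+)$ generated by these numbers). $\mathrm{Ap}(S,x)=\{s\in S:s-x\notin S\}$. $RC_b(n)$ is the set of $(t_1,\dots,t_n)\in\{0,1,\dots,b\}^n$ such that: (i) if $t_i=b$ then $t_j=0$ for all $1\le j<i$; (ii) $t_n\le b-1$; (iii) if $t_n=b-1$ then $t_1\le 1$ and $t_i=0$ for all $i\notin\{1,n\}$. *)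

From mathcomp Require Import all_boot.
Set Implicit Arguments. Unset Strict Implicit. Unset Printing Implicit Defensive.

Definition gen (b n i : nat) : nat := b ^ (n + i) + 1.

Definition inSC (b n s : nat) : Prop :=
  exists (k : nat) (a : nat -> nat), s = \sum_(i < k) a i * gen b n i.

(* Apery set Ap(S, x) = { s in S : s - x notin S } (s - x taken in Z;
   a negative integer is never in S) *)
Definition inApery (b n x s : nat) : Prop :=
  inSC b n s /\ ~ (x <= s /\ inSC b n (s - x)).

(* RC_b(n): tuples (t_1..t_n) in {0..b}^n, encoded as t : 'I_n -> nat
   with t_{j+1} = t j (0-based indexing). *)
Definition inRC (b n : nat) (t : 'I_n -> nat) : Prop :=
  (forall j, t j <= b) /\
  (forall j : 'I_n, t j = b -> forall i : 'I_n, i < j -> t i = 0) /\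
  (forall j : 'I_n, j.+1 = n -> t j <= b.-1) /\
  (forall j : 'I_n, j.+1 = n -> t j = b.-1 ->
     (forall i : 'I_n, i = 0 :> nat -> t i <= 1) /\
     (forall i : 'I_n, i <> 0 :> nat -> i.+1 <> n -> t i = 0)).

Definition RCval (b n : nat) (t : 'I_n -> nat) : nat :=
  \sum_(j < n) t j * gen b n j.+1.
Arguments inRC : clear implicits.
Arguments RCval : clear implicits.

From mathcomp Require Import all_boot zify ring.

(* Let R_i = 1 + b + ... + b^(i-1) and y = (b-1) b^n, so that c_i = y R_i + c_0.
   An element of SC^+(b,n) using a_i copies of c_i is y F + c_0 C with
   F = sum a_i R_i and C = sum a_i.  Every F <= b^n has a unique canonical
   expansion F = sum t_j R_(j+1) (digits at most b, and all digits below a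
   digit b vanish), whose digit sum is the least C over all expansions of F;
   the canonical digit vectors of value at most b^n are exactly RC_b(n).
   As c_0 is coprime to y (b is even), the least element of S in each residue
   class modulo c_0 is y F + c_0 C for the canonical digits of some F <= b^n. *)

Set Implicit Arguments.
Unset Strict Implicit.
Unset Printing Implicit Defensive.

Fixpoint repunit (b i : nat) : nat :=
  if i is i'.+1 then b * repunit b i' + 1 else 0.

Arguments repunit : simpl never.

Lemma repunitS b i : repunit b i.+1 = b * repunit b i + 1.
Proof. by []. Qed.

Lemma repunit0 b : repunit b 0 = 0.
Proof. by []. Qed.

Lemma repunit1 b : repunit b 1 = 1.
Proof. by rewrite repunitS muln0. Qed.

Lemma repunit_gt0 b i : 0 < repunit b i.+1.
Proof. by rewrite repunitS addn1. Qed.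

Lemma repunitE b i : 0 < b -> (b - 1) * repunit b i + 1 = b ^ i.
Proof.
move=> b_gt0; elim: i => [|i IH]; first by rewrite muln0.
rewrite repunitS expnS -IH; nia.
Qed.

Lemma sum_repunitS b k (a e : nat -> nat) :
  \sum_(i < k) a i * repunit b (e i).+1 =
  b * \sum_(i < k) a i * repunit b (e i) + \sum_(i < k) a i.
Proof.
rewrite big_distrr -big_split /=; apply: eq_bigr => i _; rewrite repunitS; ring.
Qed.

Lemma expn_lt_repunit b N : 0 < b -> 0 < N -> b ^ N < repunit b N.+1.
Proof.
move=> b_gt0; case: N => // N _; rewrite -(repunitE N.+1 b_gt0) (repunitS b N.+1).
have := repunit_gt0 b N; nia.
Qed.

Definition digsum N (t : nat -> nat) : nat := \sum_(j < N) t j.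

Definition dsnoc N (t : nat -> nat) (d : nat) : nat -> nat :=
  fun j => if j < N then t j else d.

Definition dshift (t : nat -> nat) : nat -> nat :=
  fun j => if j is j'.+1 then t j' else 0.

Section CanonicalDigits.

Variable b : nat.
Hypothesis b_gt1 : 1 < b.

Local Notation R := (repunit b).

Definition digval N (t : nat -> nat) : nat := \sum_(j < N) t j * R j.+1.

Definition canonical N (t : nat -> nat) : Prop :=
  forall j, j < N -> t j <= b /\ (t j = b -> forall i, i < j -> t i = 0).

Lemma digvalS N t : digval N.+1 t = digval N t + t N * R N.+1.
Proof. by rewrite /digval big_ord_recr. Qed.

Lemma digsumS N t : digsum N.+1 t = digsum N t + t N.
Proof. by rewrite /digsum big_ord_recr. Qed.

Lemma digsum_le_digval N t : digsum N t <= digval N t.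
Proof. by apply: leq_sum => j _; rewrite leq_pmulr ?repunit_gt0. Qed.

Lemma digval_eq0 N t : digval N t = 0 <-> forall i, i < N -> t i = 0.
Proof.
split=> [/eqP | t0]; last by apply: big1 => i _; rewrite t0.
rewrite sum_nat_eq0 => /forallP t0 i iN.
move: (t0 (Ordinal iN)); rewrite /= muln_eq0 => /orP[/eqP // | ].
by rewrite eqn0Ngt repunit_gt0.
Qed.

Lemma canonicalS N t :
  canonical N.+1 t <->
  [/\ canonical N t, t N <= b & t N = b -> digval N t = 0].
Proof.
split=> [ct | [ct tNb tN0] j].
  split=> [j jN | | tNb]; first exact: ct (ltnW jN).
    by case: (ct N).
  by apply/digval_eq0; case: (ct N) => // _; apply.
rewrite ltnS leq_eqVlt => /orP[/eqP -> | /ct //].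
by split=> // /tN0 /digval_eq0.
Qed.

Lemma digval_dsnoc N t d : digval N.+1 (dsnoc N t d) = digval N t + d * R N.+1.
Proof.
rewrite digvalS /dsnoc ltnn; congr (_ + _).
by apply: eq_bigr => j _; rewrite ltn_ord.
Qed.

Lemma digsum_dsnoc N t d : digsum N.+1 (dsnoc N t d) = digsum N t + d.
Proof.
rewrite digsumS /dsnoc ltnn; congr (_ + _).
by apply: eq_bigr => j _; rewrite ltn_ord.
Qed.

Lemma canonical_dsnoc N t d :
  canonical N t -> d <= b -> (d = b -> digval N t = 0) ->
  canonical N.+1 (dsnoc N t d).
Proof.
move=> ct db dt0; apply/canonicalS; rewrite /dsnoc ltnn.
split=> // [j jN | /dt0 <-]; last by apply: eq_bigr => j _; rewrite ltn_ord.
rewrite jN; have [tjb tj0] := ct j jN; split=> // /tj0 t0 i ij.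
by rewrite (ltn_trans ij jN) t0.
Qed.

Lemma digval_lt N t : canonical N t -> digval N t < R N.+1.
Proof.
elim: N => [_ | N IH]; first by rewrite /digval big_ord0 repunit_gt0.
move=> /canonicalS [ct tNb tN0]; rewrite digvalS (repunitS b N.+1).
have [tNe | tN_neq] := eqVneq (t N) b.
  by rewrite (tN0 tNe) tNe add0n mulnC addn1.
have := IH ct; have : t N < b by rewrite ltn_neqAle tN_neq tNb.
nia.
Qed.

Lemma canonical_uniq N t u :
  canonical N t -> canonical N u -> digval N t = digval N u ->
  forall j, j < N -> t j = u j.
Proof.
elim: N => [// | N IH] /canonicalS [ct _ _] /canonicalS [cu _ _].
rewrite !digvalS ![digval N _ + _]addnC => e j.
have := congr1 (modn^~ (R N.+1)) e; rewrite !modnMDl !modn_small ?digval_lt // => low.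
have := congr1 (divn^~ (R N.+1)) e.
rewrite !divnMDl ?repunit_gt0 // !divn_small ?digval_lt // !addn0 => top.
by rewrite ltnS leq_eqVlt => /orP[/eqP -> // | jN]; exact: IH.
Qed.

Lemma canonical_digsum_uniq N t u :
  canonical N t -> canonical N u -> digval N t = digval N u ->
  digsum N t = digsum N u.
Proof.
move=> ct cu e; apply: eq_bigr => j _.
exact: canonical_uniq ct cu e j (ltn_ord j).
Qed.

Lemma canonical0 N : canonical N (fun _ => 0).
Proof. by move=> j _; split=> // b0; move: b_gt1; rewrite -b0. Qed.

Lemma digval0 N : digval N (fun _ => 0) = 0.
Proof. exact/digval_eq0. Qed.

Lemma digsum0 N : digsum N (fun _ => 0) = 0.
Proof. exact: big1. Qed.

Lemma canonical_succ N t :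
  canonical N t -> (digval N t).+1 < R N.+1 ->
  exists u, [/\ canonical N u, digval N u = (digval N t).+1 &
                digsum N u <= (digsum N t).+1].
Proof.
elim: N t => [t | N IH t]; first by rewrite /digval big_ord0 repunit1.
move=> /canonicalS [ct tNb tN0]; rewrite digvalS (repunitS b N.+1) => lt_t.
have tN_ltb : t N < b.
  rewrite ltn_neqAle tNb andbT; apply/eqP => tNe.
  by move: lt_t; rewrite (tN0 tNe) tNe add0n mulnC addn1 ltnn.
have := digval_lt ct; rewrite leq_eqVlt => /orP[/eqP carry | no_carry].
  (* The lower digits represent R_(N+1) - 1: adding 1 carries into digit N. *)
  exists (dsnoc N (fun _ => 0) (t N).+1).
  split; [apply: canonical_dsnoc | rewrite digval_dsnoc | rewrite digsum_dsnoc].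
  - exact: canonical0.
  - exact: tN_ltb.
  - by move=> _; apply: digval0.
  - by rewrite digval0 add0n -addSn carry mulSn.
  - by rewrite digsum0 digsumS add0n -addnS leq_addl.
have [u [cu du su]] := IH t ct no_carry.
exists (dsnoc N u (t N)).
split; [apply: canonical_dsnoc | rewrite digval_dsnoc | rewrite digsum_dsnoc].
- exact: cu.
- exact: tNb.
- by move=> tNe; move: tN_ltb; rewrite tNe ltnn.
- by rewrite du addSn.
- by rewrite digsumS -addSn leq_add2r.
Qed.

Lemma canonical_addn N t d :
  canonical N t -> digval N t + d < R N.+1 ->
  exists u, [/\ canonical N u, digval N u = digval N t + d &
                digsum N u <= digsum N t + d].
Proof.
elim: d t => [t ct _ | d IH t ct lt_td]; first by exists t; rewrite !addn0.
have lt_t : (digval N t).+1 < R N.+1 by lia.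
have [v [cv dv sv]] := canonical_succ ct lt_t.
have lt_v : digval N v + d < R N.+1 by lia.
have [u [cu du su]] := IH v cv lt_v.
by exists u; split=> //; lia.
Qed.

Lemma canonical_exists N F :
  F < R N.+1 -> exists t, canonical N t /\ digval N t = F.
Proof.
move=> lt_F; have := @canonical_addn N _ F (@canonical0 N).
by rewrite digval0 add0n => /(_ lt_F) [t [ct dt _]]; exists t.
Qed.

Lemma canonical_dshift N t : canonical N t -> canonical N.+1 (dshift t).
Proof.
move=> ct [// | j]; rewrite ltnS => jN; have [tjb tj0] := ct j jN.
by split=> // /tj0 t0 [// | i] /t0.
Qed.

Lemma digval_dshift N t : digval N.+1 (dshift t) = b * digval N t + digsum N t.
Proof. by rewrite /digval big_ord_recl /= mul0n add0n (sum_repunitS _ _ _ S). Qed.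

Lemma digsum_dshift N t : digsum N.+1 (dshift t) = digsum N t.
Proof. by rewrite /digsum big_ord_recl add0n. Qed.

(* Dropping R_0 = 0 and using R_(i+1) = b R_i + 1, an expansion of size c reads
   b F + c with F expanded by at most c repunits; the shifted canonical digits
   of F represent b F + digsum, and c - digsum unit increments reach b F + c. *)
Lemma canonical_digsum_min k (a : nat -> nat) N t :
  canonical N t -> digval N t = \sum_(i < k) a i * R i ->
  digsum N t <= \sum_(i < k) a i.
Proof.
elim: k a N t => [a N t _ | k IH a [|N] t ct].
- by rewrite !big_ord0 => dt0; rewrite -dt0 digsum_le_digval.
- by rewrite /digsum big_ord0.
rewrite !big_ord_recl repunit0 muln0 add0n /= (sum_repunitS b k (fun i => a i.+1) id).
set F := \sum_(i < k) _; set c := \sum_(i < k) _ => dt.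
have F_lt : F < R N.+1.
  rewrite ltnNge; apply/negP => le_RF.
  have /eqP : c = 0 by have := digval_lt ct; rewrite dt (repunitS b N.+1); nia.
  rewrite sum_nat_eq0 => /forallP c0.
  have F0 : F = 0 by apply: big1 => i _; rewrite (eqP (c0 i)).
  by move: le_RF; rewrite F0 leqNgt repunit_gt0.
have [t' [ct' dt']] := canonical_exists F_lt.
have st' := IH (fun i => a i.+1) N t' ct' dt'.
have e : digval N.+1 (dshift t') + (c - digsum N t') = digval N.+1 t.
  by rewrite digval_dshift dt' -addnA subnKC.
have lt_e : digval N.+1 (dshift t') + (c - digsum N t') < R N.+2.
  by rewrite e digval_lt.
have [u [cu du su]] := canonical_addn (canonical_dshift ct') lt_e.
rewrite e in du; rewrite (canonical_digsum_uniq ct cu (esym du)) (leq_trans su) //.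
by rewrite digsum_dshift subnKC // leq_addl.
Qed.

Lemma digval_le1 N t :
  0 < N -> digval N t <= 1 <-> t 0 <= 1 /\ (forall i, 0 < i < N -> t i = 0).
Proof.
case: N => // N _; rewrite /digval big_ord_recl repunit1 muln1 /=.
rewrite (sum_repunitS b N (fun i => t i.+1) S).
rewrite -[\sum_(i < N) t i.+1 * _]/(digval N (fun i => t i.+1)).
rewrite -[\sum_(i < N) t i.+1]/(digsum N (fun i => t i.+1)).
have := digsum_le_digval N (fun i => t i.+1).
set D := digval N _; set S := digsum N _ => le_SD.
split=> [le1 | [t01 tz]].
  have /digval_eq0 D0 : D = 0 by nia.
  by split=> [|[// | i] iN]; [lia | exact: D0].
have D0 : D = 0 by apply/digval_eq0 => i iN; exact: tz.
by rewrite D0 muln0 add0n; lia.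
Qed.

Lemma digval_le_pow N t :
  0 < N -> canonical N.+1 t ->
  digval N.+1 t <= b ^ N.+1 <-> t N <= b - 1 /\ (t N = b - 1 -> digval N t <= 1).
Proof.
move=> N_gt0 /canonicalS [ct tNb _]; rewrite digvalS -(repunitE N.+1 (ltnW b_gt1)).
have R_gt1 : 1 < R N.+1.
  by case: N N_gt0 {ct tNb} => // N _; rewrite repunitS; have := repunit_gt0 b N; nia.
have := digval_lt ct; set L := digval N t; set T := t N; set r := R N.+1 => L_lt.
split=> [le | [T_le T_eq]].
  have T_le : T <= b - 1 by nia.
  by split=> // T_eq; move: le; rewrite T_eq; lia.
have [T_lt | T_gt | T_e] := ltngtP T (b - 1); [nia | lia | ].
by have := T_eq T_e; rewrite T_e; lia.
Qed.

End CanonicalDigits.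

Lemma coprime_lin_inj m y E E' K K' :
  coprime m y -> E < m -> E' < m ->
  y * E + m * K = y * E' + m * K' -> E = E'.
Proof.
move=> co; wlog le_EE' : E E' K K' / E <= E'.
  move=> wlog ltE ltE' e; have [le | /ltnW le] := leqP E E'.
    exact: wlog le ltE ltE' e.
  exact/esym/(wlog E' E K' K le ltE' ltE (esym e)).
move=> _ ltE' e; have /eqP : y * E' = y * E %[mod m].
  have e' : K' * m + y * E' = K * m + y * E by lia.
  by rewrite -(modnMDl K') e' modnMDl.
rewrite eqn_mod_dvd ?leq_mul2l ?le_EE' ?orbT // -mulnBr Gauss_dvdr //.
move=> dvd; have [|pos] := posnP (E' - E); first lia.
by have := dvdn_leq pos dvd; lia.
Qed.

Lemma coprime_gen0 b n : 0 < b -> ~~ odd b -> coprime (gen b n 0) ((b - 1) * b ^ n).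
Proof.
move=> b_gt0 b_even; rewrite /gen addn0 coprimeMr addn1 coprimeSn andbT coprime_sym.
have -> : (b ^ n).+1 = repunit b n * (b - 1) + 2 by rewrite -(repunitE n b_gt0); lia.
by rewrite /coprime gcdnMDl -/(coprime (b - 1) 2) coprimen2 oddB ?(negbTE b_even).
Qed.

Section GeneratorDigits.

Variables b n : nat.
Hypotheses (b_gt1 : 1 < b) (n_gt1 : 1 < n).

Local Notation R := (repunit b).
Local Notation m := (gen b n 0).
Local Notation y := ((b - 1) * b ^ n).
Local Notation digval := (digval b).
Local Notation canonical := (canonical b).

Lemma gen0E : m = b ^ n + 1.
Proof. by rewrite /gen addn0. Qed.

Lemma gen_repunit i : gen b n i = y * R i + m.
Proof. by rewrite gen0E /gen expnD -(repunitE i (ltnW b_gt1)); ring. Qed.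

Lemma sum_gen k (a : nat -> nat) :
  \sum_(i < k) a i * gen b n i =
  y * \sum_(i < k) a i * R i + m * \sum_(i < k) a i.
Proof.
rewrite !big_distrr -big_split; apply: eq_bigr => i _ /=; rewrite gen_repunit; ring.
Qed.

Lemma RCval_digits (t : 'I_n -> nat) (t' : nat -> nat) :
  (forall i : 'I_n, t i = t' i) ->
  RCval b n t = y * digval n t' + m * digsum n t'.
Proof.
move=> tt'; rewrite /RCval /digval /digsum !big_distrr -big_split.
by apply: eq_bigr => i _ /=; rewrite tt' gen_repunit; ring.
Qed.

Lemma inSC_digits t l : inSC b n (y * digval n t + m * (digsum n t + l)).
Proof.
pose a i := if i is i'.+1 then t i' else l.
exists n.+1, a; rewrite sum_gen !big_ord_recl repunit0 muln0 add0n /=.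
by rewrite [l + _]addnC.
Qed.

(* Reducing F modulo m only lowers y * F by a multiple of m; when F >= m the
   surplus y * (F %/ m) alone exceeds the digit sum, which is at most b ^ n. *)
Lemma inSC_canonical s :
  inSC b n s -> exists t l, [/\ canonical n t, digval n t <= b ^ n &
                              s = y * digval n t + m * (digsum n t + l)].
Proof.
move=> [k [a ->]]; rewrite sum_gen.
set F := \sum_(i < k) _; set C := \sum_(i < k) _.
have F_le : F %% m <= b ^ n.
  by rewrite -ltnS -[(b ^ n).+1]addn1 -gen0E ltn_mod gen0E addn1.
have F_lt : F %% m < R n.+1.
  exact: leq_ltn_trans F_le (expn_lt_repunit (ltnW b_gt1) (ltnW n_gt1)).
have [t [ct dt]] := canonical_exists b_gt1 F_lt.
have le_K : digsum n t <= y * (F %/ m) + C.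
  have [q0 | q_gt0] := posnP (F %/ m).
    rewrite q0 muln0 add0n; apply: (canonical_digsum_min b_gt1 ct).
    by rewrite dt -/F {2}(divn_eq F m) q0 mul0n add0n.
  have le_xy : b ^ n <= y by rewrite leq_pmull // subn_gt0.
  have := digsum_le_digval b n t; have := leq_pmulr y q_gt0; rewrite dt; lia.
exists t, (y * (F %/ m) + C - digsum n t); split=> //; first by rewrite dt.
by rewrite subnKC // dt {1}(divn_eq F m); ring.
Qed.

Lemma apery_canonical_inv s :
  inApery b n m s -> exists t, [/\ canonical n t, digval n t <= b ^ n &
                                  s = y * digval n t + m * digsum n t].
Proof.
move=> [/inSC_canonical [t [[|l] [ct le_x ->]]] not_sub].
  by exists t; rewrite addn0.
exfalso; apply: not_sub; rewrite addnS mulnS addnCA addKn; split.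
  exact: leq_addr.
exact: inSC_digits.
Qed.

(* Two such representations of elements of S congruent modulo m have the same
   digit value by coprimality, hence the same digits by uniqueness. *)
Lemma apery_canonical t :
  ~~ odd b -> canonical n t -> digval n t <= b ^ n ->
  inApery b n m (y * digval n t + m * digsum n t).
Proof.
move=> b_even ct le_x; split; first by rewrite -[digsum n t]addn0; apply: inSC_digits.
move=> [le_m /inSC_canonical [t' [l [ct' le_x' e]]]].
have {}e : y * digval n t + m * digsum n t =
             y * digval n t' + m * (digsum n t' + l).+1.
  by rewrite mulnS addnCA -e subnKC.
have lt_m E : E <= b ^ n -> E < m by rewrite gen0E addn1 ltnS.
have co := coprime_gen0 n (ltnW b_gt1) b_even.
have eq_val := coprime_lin_inj co (lt_m _ le_x) (lt_m _ le_x') e.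
move: e; rewrite eq_val (canonical_digsum_uniq b_gt1 ct ct' eq_val) gen0E.
by rewrite mulnS mulnDr; lia.
Qed.

Lemma inRC_canonical (t : 'I_n -> nat) (t' : nat -> nat) :
  (forall i : 'I_n, t i = t' i) ->
  inRC b n t <-> canonical n t' /\ digval n t' <= b ^ n.
Proof.
move=> tt'; have n_gt0 : 0 < n := ltnW n_gt1.
have top_lt : n.-1 < n by rewrite prednK.
have top_S : (Ordinal top_lt).+1 = n by rewrite /= prednK.
have is_top (j : 'I_n) : j.+1 = n -> t j = t' n.-1.
  by move=> jn; rewrite tt'; congr t'; lia.
have n1_gt0 : 0 < n.-1 by rewrite -subn1 subn_gt0.
have := digval_le_pow b_gt1 n1_gt0 (t := t'); rewrite prednK // => le_pow.
have le1 := digval_le1 b_gt1 t' n1_gt0.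
split=> [[t_le [t_b [t_top_le t_top_eq]]] | [ct le_x]].
  have ct : canonical n t'.
    move=> j jn; rewrite -(tt' (Ordinal jn)); split=> // /t_b t0 i ij.
    by rewrite -(tt' (Ordinal (ltn_trans ij jn))) t0.
  split=> //; apply/(le_pow ct); rewrite -(is_top _ top_S) subn1.
  split=> [|/(t_top_eq _ top_S) [t0_le t_mid]]; first exact: t_top_le.
  apply/le1; split; first by rewrite -(tt' (Ordinal n_gt0)); exact: t0_le.
  move=> i /andP[i_gt0 i_lt]; rewrite -(tt' (Ordinal (ltn_trans i_lt top_lt))).
  by apply: t_mid => /=; lia.
have [top_le top_eq] := (le_pow ct).1 le_x.
split; [|split; [|split]].
- by move=> j; rewrite tt'; case: (ct j (ltn_ord j)).
- move=> j; rewrite !tt' => /(proj2 (ct j (ltn_ord j))) t0 i ij.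
  by rewrite tt' t0.
- by move=> j /is_top ->; rewrite -[b.-1]subn1.
move=> j /is_top -> tb.
have [t0_le t_mid] := le1.1 (top_eq (etrans tb (esym (subn1 b)))).
split=> i; rewrite tt'; first by move=> ->.
by move=> i_neq0 i_top; apply: t_mid; have := ltn_ord i; lia.
Qed.

End GeneratorDigits.

Theorem mainTheorem16 (b n : nat) (hb : 2 <= b) (hbe : ~~ odd b) (hn : 2 <= n) :
  forall s : nat,
    inApery b n (gen b n 0) s <->
    exists t : 'I_n -> nat, inRC b n t /\ s = RCval b n t.
Proof.
move=> s; split.
  move=> /(apery_canonical_inv hb hn) [t [ct le_x ->]].
  exists (fun i : 'I_n => t i).
  by rewrite (RCval_digits hb (t' := t)) // (inRC_canonical hb hn (t' := t)).
move=> [t [RCt ->]].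
pose t' j := if insub j is Some i then t i else 0.
have tt' (i : 'I_n) : t i = t' i by rewrite /t' valK.
have [ct le_x] := (inRC_canonical hb hn tt').1 RCt.
by rewrite (RCval_digits hb tt'); apply: apery_canonical.
Qed.
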